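(* Let $\Lambda\subset\mathbb Z^n$ be an orthogonal sublattice. Then $\Lambda$ is cubiquitous if and only if, up to a change of basis of $\mathbb Z^n$, $\Lambda$ admits a basis $\{b_1,\ldots,b_n\}$ such that the matrix $B=\begin{bmatrix} b_1&\cdots&b_n\end{bmatrix}$ is a block (diagonal) matrix each of whose blocks is one of $$\begin{bmatrix}1\end{bmatrix},\qquad \begin{bmatrix}2\end{bmatrix},\qquad \begin{bmatrix}1&-1\\1&1\end{bmatrix}.$$
   Context: $\mathbb Z^n$ carries the standard dot product $\langle\cdot,\cdot\rangle$ with standard basis $e_1,\ldots,e_n$. A ''change of basis of $\mathbb Z^n$'' means replacing the standard basis by another orthonormal basis, i.e. applying an automorphism of $\mathbb Z^n$ preserving the dot product (a signed permutation of coordinates). A sublattice $\Lambda\subset\mathbb Z^n$ is full-rank if $\mathrm{rank}\,\Lambda=n$. An orthogonal sublattice is a full-rank sublattice of $\mathbb Z^n$ admitting a basis of pairwise orthogonal vectors. A full-rank sublattice $\Lambda\subset\mathbb Z^n$ is cubiquitous if $\Lambda\cap(x+\{0,1\}^n)\neq\emptyset$ for every $x\in\mathbb Z^n$. *)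

From mathcomp Require Import all_boot all_order all_algebra.
Set Implicit Arguments. Unset Strict Implicit. Unset Printing Implicit Defensive.
Import Order.TTheory GRing.Theory Num.Theory.
Local Open Scope ring_scope.

Definition is_basis_of (n : nat) (L : 'cV[int]_n -> Prop) (B : 'M[int]_n) : Prop :=
  (forall x : 'cV[int]_n, L x <-> exists c : 'cV[int]_n, x = B *m c)
  /\ \det B != 0.

Definition full_rank_sublattice (n : nat) (L : 'cV[int]_n -> Prop) : Prop :=
  exists B : 'M[int]_n, is_basis_of L B.

Definition dotZ (n : nat) (u v : 'cV[int]_n) : int := \sum_(k < n) u k 0 * v k 0.

Definition orthogonal_sublattice (n : nat) (L : 'cV[int]_n -> Prop) : Prop :=
  exists B : 'M[int]_n, is_basis_of L B /\
    forall i j : 'I_n, i != j -> dotZ (col i B) (col j B) = 0.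

Definition cubiquitous (n : nat) (L : 'cV[int]_n -> Prop) : Prop :=
  forall x : 'cV[int]_n, exists y : 'cV[int]_n,
    L y /\ forall i : 'I_n, (y i 0 - x i 0 == 0) || (y i 0 - x i 0 == 1).

(* change of basis of Z^n: an automorphism of Z^n preserving the dot product,
   i.e. an integer matrix P with P^T P = 1 (these are exactly signed permutations) *)
Definition change_of_basis (n : nat) (P : 'M[int]_n) : Prop :=
  P^T *m P = 1%:M.

(* The three allowed diagonal blocks: [1], [2], [[1,-1],[1,1]]. *)
Inductive blk := Blk1 | Blk2 | Blk3.

Definition blk_size (b : blk) : nat := match b with Blk1 => 1 | Blk2 => 1 | Blk3 => 2 end.

Definition blks_size (ks : seq blk) : nat := sumn (map blk_size ks).

Fixpoint blkdiag_entry (ks : seq blk) (i j : nat) : int :=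
  match ks with
  | [::] => 0
  | Blk1 :: ks' =>
      if (i == 0)%N && (j == 0)%N then 1
      else if (i == 0)%N || (j == 0)%N then 0
      else blkdiag_entry ks' i.-1 j.-1
  | Blk2 :: ks' =>
      if (i == 0)%N && (j == 0)%N then 2
      else if (i == 0)%N || (j == 0)%N then 0
      else blkdiag_entry ks' i.-1 j.-1
  | Blk3 :: ks' =>
      if (i < 2)%N && (j < 2)%N then
        (if (i == 0)%N && (j == 1)%N then -1 else 1)
      else if (i < 2)%N || (j < 2)%N then 0
      else blkdiag_entry ks' (i - 2) (j - 2)
  end.

Definition allowed_block_diag (n : nat) (B : 'M[int]_n) : Prop :=
  exists ks : seq blk, blks_size ks = n /\
    B = \matrix_(i < n, j < n) blkdiag_entry ks i j.

From mathcomp Require Import all_boot all_order all_algebra fingroup perm zify ring.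
Set Implicit Arguments. Unset Strict Implicit. Unset Printing Implicit Defensive.
Import Order.TTheory GRing.Theory Num.Theory.
Local Open Scope ring_scope.

(* Let b_1, ..., b_n be an orthogonal basis of the lattice.  A lattice vector y has
   <y, b_j> divisible by <b_j, b_j>, and cubiquity provides such a y in x + {0,1}^n for
   every x.  Choosing x suitably, this forces first <b, b> <= |b|_1 + |b_k| for every
   nonzero coordinate b_k of a basis vector b, so that b is a {0, +-1}-vector or +-2 e_k,
   and then that two basis vectors sharing a coordinate have the same support of size
   two.  Hence, after permuting rows and columns and changing signs, the basis matrix
   splits into 1x1 blocks (1) and (2) and 2x2 blocks [[1, -1], [1, 1]].  Conversely,
   the lattices Z, 2Z and {(a - b, a + b)} are cubiquitous, and cubiquity is preserved
   by signed permutations of the coordinates. *)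

Lemma dvdz_le (d m : int) : 0 <= d -> 0 < m -> (d %| m)%Z -> d <= m.
Proof.
move=> d_ge0 m_gt0 /dvdzP [q def_m]; rewrite def_m in m_gt0 *.
by case: (lerP q 0) => q0; nia.
Qed.

Lemma dvdz_bounded (d m : int) : 0 < d -> (d %| m)%Z -> 0 <= m <= d -> m = 0 \/ m = d.
Proof. by move=> d_gt0 /dvdzP [q ->]; case: (lerP q 0) => q0; nia. Qed.

Lemma divz2_spec (z : int) : z = (z %/ 2)%Z * 2 + (z %% 2)%Z /\ 0 <= (z %% 2)%Z <= 1.
Proof. by split; [exact: divz_eq | rewrite modz_ge0 //= -ltzD1 ltz_pmod]. Qed.

Lemma mulrr_ge0 (a : int) : 0 <= a * a.
Proof. by rewrite -expr2 sqr_ge0. Qed.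

Lemma abs_le1P (a : int) : `|a| <= 1 -> [\/ a = -1, a = 0 | a = 1].
Proof.
move=> a1; have : a = -1 \/ a = 0 \/ a = 1 by lia.
by case=> [|[|]]; [constructor 1 | constructor 2 | constructor 3].
Qed.

Lemma abs1P (a : int) : `|a| = 1 -> a = 1 \/ a = -1.
Proof. by lia. Qed.

Lemma sqr1P (a : int) : a * a = 1 -> a = 1 \/ a = -1.
Proof. by case: (ltrgt0P a) => ? ?; nia. Qed.

Lemma abs1_sqr (a : int) : `|a| = 1 -> a * a = 1.
Proof. by case/abs1P=> ->. Qed.

Lemma abs_le1_sqr (a : int) : `|a| <= 1 -> a != 0 -> a * a = 1.
Proof. by case/abs_le1P=> ->. Qed.

Lemma abs_le1_eq1 (a : int) : `|a| <= 1 -> a != 0 -> `|a| = 1.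
Proof. by lia. Qed.

Lemma abs_max_min (a : int) : `|a| = Num.max a 0 - Num.min a 0.
Proof. by lia. Qed.

Section SumsOfNonnegatives.
Variables (n : nat) (F : 'I_n -> int).
Hypothesis F_ge0 : forall i, 0 <= F i.

Lemma ler_sum_term k : F k <= \sum_i F i.
Proof. by rewrite (bigD1 k) //= lerDl sumr_ge0. Qed.

Lemma ler_sum_terms2 k l : k != l -> F k + F l <= \sum_i F i.
Proof. by move=> kl; rewrite (bigD1 k) // (bigD1 l) 1?eq_sym //= addrA lerDl sumr_ge0. Qed.

End SumsOfNonnegatives.

Lemma sum_eq0_other n (F : 'I_n -> int) k :
  \sum_i F i = 0 -> F k != 0 -> exists2 l, l != k & F l != 0.
Proof.
move=> F0 Fk; apply/exists_inP; apply: contraNT Fk => /exists_inPn Fl.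
by rewrite -F0 (bigD1 k) //= big1 ?addr0 // => l /Fl /negPn /eqP.
Qed.

Lemma sum_eq0_pos n (F : 'I_n -> int) k :
  \sum_i F i = 0 -> F k != 0 -> exists i, 0 < F i.
Proof.
move=> F0 Fk; apply/existsP; apply: contraNT Fk => /existsPn F_le0.
have F_ge0 i : true -> 0 <= - F i by have := F_le0 i; lia.
have := psumr_eq0P F_ge0; rewrite sumrN F0 oppr0 => /(_ erefl k isT) /eqP.
by rewrite oppr_eq0.
Qed.

Lemma hadamard2_no_third (a0 a1 b0 b1 d0 d1 : int) :
  `|a0| = 1 -> `|a1| = 1 -> `|b0| = 1 -> `|b1| = 1 -> `|d0| = 1 -> `|d1| = 1 ->
  a0 * b0 + a1 * b1 = 0 -> a0 * d0 + a1 * d1 = 0 -> b0 * d0 + b1 * d1 = 0 -> False.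
Proof. by do 6![case/abs1P=> ->]; lia. Qed.

(** * Divisibility constraints from cubiquity *)

Definition is_bit (a : int) := (a == 0) || (a == 1).

Section Vectors.
Variable n : nat.
Implicit Types (x u v b c e : 'I_n -> int) (k l : 'I_n).

Definition dot u v : int := \sum_i u i * v i.

Definition delta k (a : int) : 'I_n -> int := fun i => if i == k then a else 0.

Definition binary e := forall i, is_bit (e i).

Definition ternary b := forall i, `|b i| <= 1.

Definition cube_min b := \sum_i Num.min (b i) 0.
Definition cube_max b := \sum_i Num.max (b i) 0.

(* Cubiquity enters only through this property of two vectors b, c of an orthogonal
   basis: a lattice vector y has <y, b> divisible by <b, b>. *)
Definition cube_divisible b c := forall x, exists2 e, binary e &
  (dot b b %| dot (x \+ e) b)%Z && (dot c c %| dot (x \+ e) c)%Z.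

Lemma dotC u v : dot u v = dot v u.
Proof. by apply: eq_bigr => i _; rewrite mulrC. Qed.

Lemma eq_dotl u u' v : u =1 u' -> dot u v = dot u' v.
Proof. by move=> eq_u; apply: eq_bigr => i _; rewrite eq_u. Qed.

Lemma dotDl u u' v : dot (u \+ u') v = dot u v + dot u' v.
Proof. by rewrite -big_split; apply: eq_bigr => i _; rewrite mulrDl. Qed.

Lemma dot_deltal k a v : dot (delta k a) v = a * v k.
Proof.
rewrite /dot (bigD1 k) //= big1 => [|i /negbTE]; first by rewrite /delta eqxx addr0.
by rewrite /delta => ->; rewrite mul0r.
Qed.

Lemma dot_supp1 u v k0 : (forall k, k != k0 -> v k = 0) -> dot u v = u k0 * v k0.
Proof.
move=> v_supp; rewrite /dot (bigD1 k0) //= big1 ?addr0 // => k /v_supp ->.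
by rewrite mulr0.
Qed.

Lemma dot_supp2 u v k0 k1 : k0 != k1 ->
  (forall k, k != k0 -> k != k1 -> v k = 0) -> dot u v = u k0 * v k0 + u k1 * v k1.
Proof.
move=> k01 v_supp; rewrite /dot (bigD1 k0) // (bigD1 k1) 1?eq_sym //= big1 ?addr0 //.
by move=> k /andP [kk0 kk1]; rewrite v_supp ?mulr0.
Qed.

Lemma dot_ge0 v : 0 <= dot v v.
Proof. by apply: sumr_ge0 => i _; apply: mulrr_ge0. Qed.

Lemma ler_sqr_dot v k : v k * v k <= dot v v.
Proof. exact: ler_sum_term (fun i => mulrr_ge0 (v i)) k. Qed.

Lemma ler_sqr2_dot v k l : k != l -> v k * v k + v l * v l <= dot v v.
Proof. exact: ler_sum_terms2 (fun i => mulrr_ge0 (v i)) k l. Qed.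

Lemma dot_gt0 v k : v k != 0 -> 0 < dot v v.
Proof. by move=> vk; apply: lt_le_trans (ler_sqr_dot v k); nia. Qed.

Lemma dot_eq_sqr2 v k0 k1 : k0 != k1 ->
  dot v v = v k0 * v k0 + v k1 * v k1 -> forall k, k != k0 -> k != k1 -> v k = 0.
Proof.
move=> k01; rewrite /dot (bigD1 k0) // (bigD1 k1) 1?eq_sym //= addrA.
rewrite -[X in _ = X]addr0 => /addrI /psumr_eq0P rest0 k kk0 kk1.
apply/eqP; rewrite -sqrf_eq0 expr2; apply/eqP/rest0; last by rewrite kk0.
by move=> i _; apply: mulrr_ge0.
Qed.

Lemma dot_eq1 v : dot v v = 1 -> exists k, v k * v k = 1 /\ forall i, i != k -> v i = 0.
Proof.
move=> v1; have [k vk] : exists k, v k != 0.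
  apply/existsP; apply: contraT => /existsPn v0; move: v1; rewrite /dot big1 // => i _.
  by move/negPn: (v0 i) => /eqP ->; rewrite mul0r.
have rest_ge0 : 0 <= \sum_(i | i != k) v i * v i.
  by apply: sumr_ge0 => i _; apply: mulrr_ge0.
have vk_ge1 : 1 <= v k * v k by move: vk; case: (ltrgt0P (v k)) => //; nia.
move: v1; rewrite /dot (bigD1 k) //= => /(canRL (addKr _)) rest_eq.
have rest0 : \sum_(i | i != k) v i * v i = 0.
  by apply/eqP; rewrite eq_le rest_ge0 andbT rest_eq; lia.
exists k; split; first by move: rest_eq; rewrite rest0; lia.
move=> i ik; apply/eqP; rewrite -sqrf_eq0 expr2; apply/eqP.
by apply: (psumr_eq0P _ rest0) => // j _; apply: mulrr_ge0.
Qed.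

Lemma dot_binary_bounds e b : binary e -> cube_min b <= dot e b <= cube_max b.
Proof.
move=> e01; apply/andP; split; apply: ler_sum => i _.
  by case/orP: (e01 i) => /eqP ->; lia.
by case/orP: (e01 i) => /eqP ->; lia.
Qed.

Lemma cube_width b : cube_max b - cube_min b = \sum_i `|b i|.
Proof. by rewrite -sumrB; apply: eq_bigr => i _; lia. Qed.

Lemma ternary_dot b : ternary b -> dot b b = \sum_i `|b i|.
Proof. by move=> b1; apply: eq_bigr => i _; have := b1 i; nia. Qed.

Lemma cube_divisible_sym b c : cube_divisible b c -> cube_divisible c b.
Proof. by move=> hbc x; have [e e01 hdiv] := hbc x; exists e; rewrite // andbC. Qed.

Lemma cube_divisible_dot_le b k : cube_divisible b b -> b k != 0 ->
  dot b b <= \sum_i `|b i| + `|b k|.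
Proof.
move=> b_cube bk0; pose a : int := `|b k|; have a_gt0 : 0 < a by rewrite normr_gt0.
(* m is least with m * a > - cube_min b, so that <x + e, b> lies in
   (0, \sum_i |b i| + |b k|] for x = m sgn(b k) e_k. *)
set m := ((- cube_min b) %/ a)%Z + 1.
have m_lo : - cube_min b < m * a by apply: ltz_ceil.
have m_hi : (m - 1) * a <= - cube_min b.
  by rewrite addrK; apply: lez_floor; rewrite gt_eqF.
have [e e01 /andP [hdiv _]] := b_cube (delta k ((-1) ^+ (b k < 0)%R * m)).
have xb : (-1) ^+ (b k < 0)%R * m * b k = m * a by rewrite /a normrEsign; ring.
rewrite dotDl dot_deltal xb in hdiv.
have := dot_binary_bounds b e01; have := cube_width b.
by have := dvdz_le (dot_ge0 b) _ hdiv; lia.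
Qed.

Lemma dot_le_l1_shape b :
  (forall k, b k != 0 -> dot b b <= \sum_i `|b i| + `|b k|) ->
  ternary b \/ exists2 M, `|b M| = 2 & forall i, i != M -> b i = 0.
Proof.
move=> b_le; have [b1|] := boolP [forall i, `|b i| <= 1].
  by left => i; apply/forallP: b1 i.
case/forallPn => M bM; pose F i := b i * b i - `|b i|.
have F_ge0 i : 0 <= F i by rewrite /F; nia.
have F_le k : b k != 0 -> \sum_i F i <= `|b k| by move/b_le; rewrite /F sumrB lerBlDl.
have bM0 : b M != 0 by lia.
have FM : F M <= `|b M| := le_trans (ler_sum_term F_ge0 M) (F_le M bM0).
have bM2 : `|b M| = 2 by move: FM; rewrite /F; nia.
right; exists M => // i iM; apply/eqP; apply: contraT => bi0.
have : F i + F M <= `|b i| := le_trans (ler_sum_terms2 F_ge0 iM) (F_le i bi0).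
by move: FM; rewrite /F; nia.
Qed.

Lemma ternary_cube_extreme b x e : ternary b -> binary e -> 0 < dot b b ->
  (dot b b %| dot x b + dot e b)%Z -> dot x b = - cube_min b ->
  dot e b = cube_min b \/ dot e b = cube_max b.
Proof.
move=> b1 e01 b_gt0 hdiv xb; rewrite xb addrC in hdiv.
have := dot_binary_bounds b e01; have := cube_width b; rewrite -ternary_dot // => width.
by have := dvdz_bounded b_gt0 hdiv; lia.
Qed.

Lemma cube_extreme_dot_orth b c e : ternary b -> binary e -> dot b c = 0 ->
  dot e b = cube_min b \/ dot e b = cube_max b ->
  dot e c = \sum_i (if b i < 0 then c i else 0)
          + \sum_i (if b i == 0 then e i * c i else 0).
Proof.
move=> b1 e01 bc0 e_ext; rewrite -big_split /=.
case: e_ext => [e_min|e_max].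
  have gap_ge0 i : true -> 0 <= e i * b i - Num.min (b i) 0.
    by case/orP: (e01 i) => /eqP ->; lia.
  have := psumr_eq0P gap_ge0; rewrite sumrB -/(dot e b) -/(cube_min b) e_min subrr.
  move=> /(_ erefl) gap0; apply: eq_bigr => i _; move: (gap0 i isT).
  by case/orP: (e01 i) => /eqP ->; case: (abs_le1P (b1 i)) => ->; rewrite /=; lia.
have gap_ge0 i : true -> 0 <= Num.max (b i) 0 - e i * b i.
  by case/orP: (e01 i) => /eqP ->; lia.
have := psumr_eq0P gap_ge0; rewrite sumrB -/(dot e b) -/(cube_max b) e_max subrr.
move=> /(_ erefl) gap0; transitivity (dot e c - dot b c); first by rewrite bc0 subr0.
rewrite -sumrB; apply: eq_bigr => i _; move: (gap0 i isT).
by case/orP: (e01 i) => /eqP ->; case: (abs_le1P (b1 i)) => ->; rewrite /=; lia.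
Qed.

Lemma orth_overlap2 b c k : dot b c = 0 -> b k != 0 -> c k != 0 ->
  2 <= \sum_i (if b i == 0 then 0 else `|c i|).
Proof.
move=> bc0 bk ck; have [k' k'k bck'] := sum_eq0_other bc0 (mulf_neq0 bk ck).
have bk' : b k' != 0 by apply: contraNneq bck' => ->; rewrite mul0r.
have ck' : c k' != 0 by apply: contraNneq bck' => ->; rewrite mulr0.
pose F i := if b i == 0 then 0 else `|c i|.
have F_ge0 i : 0 <= F i by rewrite /F; case: (_ == 0).
apply: le_trans (ler_sum_terms2 F_ge0 k'k); rewrite /F (negbTE bk) (negbTE bk').
by clear -ck ck'; lia.
Qed.

Lemma ternary_orth_support b c k l : ternary b -> ternary c -> dot b c = 0 ->
  cube_divisible b c -> b k != 0 -> c k != 0 -> b l = 0 -> c l = 0.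
Proof.
move=> b1 c1 bc0 bc_cube bk ck bl; apply/eqP; apply: contraT => cl.
pose K := \sum_i (if b i < 0 then c i else 0).
pose W e := \sum_i (if b i == 0 then e i * c i else 0).
pose nW := \sum_i (if b i == 0 then Num.min (c i) 0 else 0).
pose pW := \sum_i (if b i == 0 then Num.max (c i) 0 else 0).
(* <x, b> = - cube_min b pins e down on the support of b, and then
   0 < <x + e, c> < <c, c>. *)
pose xk := - cube_min b * b k.
pose x := delta k xk \+ delta l (c l * (1 - K - nW - xk * c k)).
have [e e01 /andP [div_b div_c]] := bc_cube x.
have bk2 := abs_le1_sqr (b1 k) bk; have cl2 := abs_le1_sqr (c1 l) cl.
have xb : dot x b = - cube_min b.
  by rewrite dotDl !dot_deltal bl mulr0 addr0 /xk -mulrA bk2 mulr1.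
have xc : dot x c = 1 - K - nW.
  by rewrite dotDl !dot_deltal [c l * _ * _]mulrAC cl2 mul1r; ring.
rewrite dotDl in div_b; rewrite dotDl in div_c.
have e_ext := ternary_cube_extreme b1 e01 (dot_gt0 bk) div_b xb.
have ec : dot e c = K + W e := cube_extreme_dot_orth b1 e01 bc0 e_ext.
have W_bounds : nW <= W e <= pW.
  apply/andP; split; apply: ler_sum => i _.
    by case/orP: (e01 i) => /eqP ->; case: (_ == 0); lia.
  by case/orP: (e01 i) => /eqP ->; case: (_ == 0); lia.
have overlap2 := orth_overlap2 bc0 bk ck.
have c_norm : dot c c = pW - nW + \sum_i (if b i == 0 then 0 else `|c i|).
  rewrite ternary_dot // -sumrB -big_split; apply: eq_bigr => i _ /=.
  by case: (_ == 0); rewrite ?subrr ?add0r ?addr0 // abs_max_min.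
have val_gt0 : 0 < dot x c + dot e c by rewrite xc ec; move: W_bounds; clear; lia.
have := dvdz_le (dot_ge0 c) val_gt0 div_c; rewrite xc ec c_norm.
by move: W_bounds overlap2; clear; lia.
Qed.

Lemma ternary_orth_signs b c k : ternary b -> ternary c -> dot b c = 0 ->
  b k != 0 -> c k != 0 ->
  exists m m', [/\ m != m', c m = b m, c m' = - b m', b m * b m = 1 & b m' * b m' = 1].
Proof.
move=> b1 c1 bc0 bk ck; have [m bcm] := sum_eq0_pos bc0 (mulf_neq0 bk ck).
have [m' bcm'] : exists m', 0 < - (b m' * c m').
  apply: (@sum_eq0_pos _ (fun i => - (b i * c i)) k).
    by rewrite sumrN -/(dot b c) bc0 oppr0.
  by rewrite oppr_eq0 mulf_neq0.
exists m, m'; split.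
- by apply: contraTneq bcm => ->; move: bcm'; lia.
- by move: bcm; case: (abs_le1P (b1 m)) => ->; case: (abs_le1P (c1 m)) => ->.
- by move: bcm'; case: (abs_le1P (b1 m')) => ->; case: (abs_le1P (c1 m')) => ->.
- by move: bcm; case: (abs_le1P (b1 m)) => ->; case: (abs_le1P (c1 m)) => ->.
by move: bcm'; case: (abs_le1P (b1 m')) => ->; case: (abs_le1P (c1 m')) => ->.
Qed.

Lemma ternary_orth_dot2 b c k : ternary b -> ternary c -> dot b c = 0 ->
  cube_divisible b c -> (forall i, (b i == 0) = (c i == 0)) -> b k != 0 ->
  dot b b = 2.
Proof.
move=> b1 c1 bc0 bc_cube supp bk.
have ck : c k != 0 by rewrite -supp.
have [m [m' [mm' cm cm' bm2 bm'2]]] := ternary_orth_signs b1 c1 bc0 bk ck.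
pose K := \sum_i (if b i < 0 then c i else 0).
pose z := - cube_min b - K.
pose P := (z %/ 2)%Z + 1.
pose Q := - cube_min b - P.
(* <x + e, c> = 2 - z mod 2 is positive, at most 2, and divisible by <c, c> = <b, b>. *)
pose x := delta m (b m * P) \+ delta m' (b m' * Q).
have [e e01 /andP [div_b div_c]] := bc_cube x.
rewrite dotDl in div_b; rewrite dotDl in div_c.
have xb : dot x b = - cube_min b.
  by rewrite dotDl !dot_deltal mulrAC bm2 [b m' * _ * _]mulrAC bm'2 /Q; ring.
have xc : dot x c = P - Q.
  by rewrite dotDl !dot_deltal cm cm' mulrAC bm2 mulrN [b m' * _ * _]mulrAC bm'2; ring.
have ec : dot e c = K.
  have e_ext := ternary_cube_extreme b1 e01 (dot_gt0 bk) div_b xb.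
  rewrite (cube_extreme_dot_orth b1 e01 bc0 e_ext) [X in _ + X]big1 ?addr0 // => i _.
  case: eqP => // /eqP bi0.
  by move: (supp i); rewrite bi0 => /esym/eqP ->; rewrite mulr0.
have cc_bb : dot c c = dot b b.
  rewrite !ternary_dot //; apply: eq_bigr => i _.
  by move: (supp i); case: (abs_le1P (b1 i)) => ->; case: (abs_le1P (c1 i)) => ->.
have bb_ge2 : 2 <= dot b b by have := ler_sqr2_dot b mm'; rewrite bm2 bm'2.
have [z_div z_mod] := divz2_spec z.
have val : dot x c + dot e c = 2 - (z %% 2)%Z.
  by rewrite xc ec /Q /P; move: z_div; rewrite /z; lia.
rewrite val cc_bb in div_c.
by have := dvdz_le (dot_ge0 b) _ div_c; move: bb_ge2 z_mod; clear; lia.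
Qed.

Lemma ternary_orth_pair b c k : ternary b -> ternary c -> dot b c = 0 ->
  cube_divisible b c -> b k != 0 -> c k != 0 ->
  (forall i, (b i == 0) = (c i == 0)) /\ dot b b = 2.
Proof.
move=> b1 c1 bc0 bc_cube bk ck.
have supp i : (b i == 0) = (c i == 0).
  apply/eqP/eqP => [|ci0]; first exact: ternary_orth_support bc_cube bk ck.
  apply: (ternary_orth_support c1 b1 _ (cube_divisible_sym bc_cube) ck bk ci0).
  by rewrite dotC.
by split=> //; apply: ternary_orth_dot2 bc_cube supp bk.
Qed.

End Vectors.

(** * Columns of an orthogonal basis of a cubiquitous lattice *)

Definition orthogonal_cols n (B : 'M[int]_n) :=
  forall i j : 'I_n, i != j -> dot (B^~ i) (B^~ j) = 0.

Lemma dotZ_col n (B : 'M[int]_n) i j : dotZ (col i B) (col j B) = dot (B^~ i) (B^~ j).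
Proof. by apply: eq_bigr => k _; rewrite !mxE. Qed.

Lemma det_row_kernel n (B : 'M[int]_n) (w : 'I_n -> int) :
  \det B != 0 -> (forall j, dot w (B^~ j) = 0) -> forall k, w k = 0.
Proof.
move=> detB wB k; have wB0 : \row_k w k *m B = 0.
  by apply/rowP => j; rewrite !mxE -[RHS](wB j); apply: eq_bigr => i _; rewrite mxE.
have := congr1 (mulmx^~ (\adj B)) wB0; rewrite -mulmxA mul_mx_adj mul0mx mul_mx_scalar.
by move/rowP/(_ k)/eqP; rewrite !mxE mulf_eq0 (negbTE detB) => /eqP.
Qed.

Definition isolated_entry n (C : 'M[int]_n) k j :=
  (forall k', k' != k -> C k' j = 0) /\ (forall j', j' != j -> C k j' = 0).

Definition isolated_square n (C : 'M[int]_n) k0 k1 j0 j1 :=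
  (forall k, k != k0 -> k != k1 -> C k j0 = 0 /\ C k j1 = 0) /\
  (forall j, j != j0 -> j != j1 -> C k0 j = 0 /\ C k1 j = 0).

Definition hadamard2 (a b c d : int) :=
  [/\ `|a| = 1, `|b| = 1, `|c| = 1, `|d| = 1 & a * b + c * d = 0].

Section CubiquitousOrthogonalBasis.
Variables (n : nat) (L : 'cV[int]_n -> Prop) (C : 'M[int]_n).
Hypotheses (L_cub : cubiquitous L) (C_basis : is_basis_of L C)
  (C_orth : orthogonal_cols C).

Lemma dvdz_dot_col y j : L y -> (dot (C^~ j) (C^~ j) %| dot (fun i => y i 0%R) (C^~ j))%Z.
Proof.
move=> Ly; have [c ->] := (C_basis.1 y).1 Ly.
have -> : dot (fun i => (C *m c) i 0) (C^~ j) = \sum_l c l 0 * dot (C^~ l) (C^~ j).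
  rewrite /dot; under eq_bigr do rewrite mxE big_distrl /=.
  rewrite exchange_big; apply: eq_bigr => l _; rewrite mulr_sumr.
  by apply: eq_bigr => i _; ring.
rewrite (bigD1 j) //= big1 ?addr0 => [|l lj]; first exact: dvdz_mull (dvdzz _).
by rewrite C_orth ?mulr0.
Qed.

Lemma col_cube_divisible j j' : cube_divisible (C^~ j) (C^~ j').
Proof.
move=> x; have [y [Ly y01]] := L_cub (\col_i x i).
exists (fun i => y i 0 - x i) => [i|]; first by move: (y01 i); rewrite mxE.
have xe : x \+ (fun i => y i 0 - x i) =1 (fun i => y i 0) by move=> i /=; ring.
by rewrite !(eq_dotl _ xe) !dvdz_dot_col.
Qed.

Lemma col_shape j :
  ternary (C^~ j) \/ exists2 M, `|C M j| = 2 & forall i, i != M -> C i j = 0.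
Proof.
apply: dot_le_l1_shape => k; exact: cube_divisible_dot_le (col_cube_divisible j j).
Qed.

Lemma col_ternary j j' k : j != j' -> C k j != 0 -> C k j' != 0 -> ternary (C^~ j).
Proof.
move=> jj' kj kj'; case: (col_shape j) => // [[M _ M_only]].
have kM : k = M by apply: contraNeq kj => /M_only ->.
have := C_orth jj'; rewrite /dot (bigD1 k) //= big1 ?addr0 => [/eqP|i ik].
  by rewrite mulf_eq0 (negbTE kj) (negbTE kj').
by rewrite M_only ?mul0r // -kM.
Qed.

Lemma col_pair j j' k : j != j' -> C k j != 0 -> C k j' != 0 ->
  [/\ ternary (C^~ j), ternary (C^~ j'),
      forall i, (C i j == 0) = (C i j' == 0) & dot (C^~ j) (C^~ j) = 2].
Proof.
move=> jj' kj kj'; have Tj := col_ternary jj' kj kj'.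
have Tj' : ternary (C^~ j') by apply: col_ternary kj' kj; rewrite eq_sym.
by have [] := ternary_orth_pair Tj Tj' (C_orth jj') (col_cube_divisible j j') kj kj'.
Qed.

Lemma row_nonzero k : exists j, C k j != 0.
Proof.
apply/existsP; apply: contraT => /existsPn Ck0.
suff : delta k 1 k = 0 by rewrite /delta eqxx.
apply: (det_row_kernel C_basis.2) => j.
by rewrite dot_deltal mul1r; apply/eqP; rewrite -[_ == 0]negbK Ck0.
Qed.

Lemma col_isolated_entry k0 j0 : C k0 j0 != 0 -> (forall k, k != k0 -> C k j0 = 0) ->
  isolated_entry C k0 j0 /\ (`|C k0 j0| = 1 \/ `|C k0 j0| = 2).
Proof.
move=> Ck0j0 col0; split; first split=> // j jj0.
  apply/eqP; apply: contraT => Ck0j; have j0j : j0 != j by rewrite eq_sym.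
  have [_ _ _] := col_pair j0j Ck0j0 Ck0j.
  by rewrite (dot_supp1 _ col0); case: (lerP `|C k0 j0| 1); nia.
case: (col_shape j0) => [T|[M CM2 M_only]]; first by left; have := T k0; lia.
have kM : k0 = M by apply: contraNeq Ck0j0 => /M_only ->.
by right; rewrite kM.
Qed.

Lemma col_partner k0 k1 j0 d : k0 != k1 -> C k0 j0 != 0 -> C k1 j0 != 0 ->
  d != j0 -> (C k0 d != 0) || (C k1 d != 0) ->
  [/\ `|C k0 j0| = 1, `|C k1 j0| = 1, `|C k0 d| = 1, `|C k1 d| = 1
    & forall k, k != k0 -> k != k1 -> C k j0 = 0 /\ C k d = 0].
Proof.
move=> k01 k0j0 k1j0 dj0 kd.
have [kk kkj0 kkd] : exists2 kk, C kk j0 != 0 & C kk d != 0.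
  by case/orP: kd => ?; [exists k0 | exists k1].
have j0d : j0 != d by rewrite eq_sym.
have [Tj0 Td supp dot2] := col_pair j0d kkj0 kkd.
have k0d : C k0 d != 0 by rewrite -supp.
have k1d : C k1 d != 0 by rewrite -supp.
have dot_j0 : dot (C^~ j0) (C^~ j0) = C k0 j0 * C k0 j0 + C k1 j0 * C k1 j0.
  by rewrite dot2 !abs_le1_sqr.
split; try exact: abs_le1_eq1.
move=> k kk0 kk1; have Ckj0 := dot_eq_sqr2 k01 dot_j0 kk0 kk1.
by split=> //; apply/eqP; rewrite -supp Ckj0.
Qed.

Lemma col_isolated_square k0 k1 j0 : k0 != k1 -> C k0 j0 != 0 -> C k1 j0 != 0 ->
  exists j1, [/\ j1 != j0, isolated_square C k0 k1 j0 j1 &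
    hadamard2 (C k0 j0) (C k0 j1) (C k1 j0) (C k1 j1)].
Proof.
move=> k01 k0j0 k1j0.
have orth2 j j' : j != j' -> (forall k, k != k0 -> k != k1 -> C k j' = 0) ->
    C k0 j * C k0 j' + C k1 j * C k1 j' = 0.
  by move=> jj' j'_supp; rewrite -(C_orth jj') (dot_supp2 _ k01).
have [j1 /andP [j1j0 kj1]] :
    exists j1, (j1 != j0) && ((C k0 j1 != 0) || (C k1 j1 != 0)).
  (* Otherwise rows k0 and k1 are proportional, contradicting \det C != 0. *)
  apply/existsP; apply: contraT => /existsPn rows0.
  pose w := delta k0 (C k1 j0) \+ delta k1 (- C k0 j0).
  suff : w k0 = 0.
    by rewrite /w /= /delta eqxx (negbTE k01) addr0 => /eqP; rewrite (negbTE k1j0).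
  apply: (det_row_kernel C_basis.2) => j; rewrite dotDl !dot_deltal.
  have [->|jj0] := eqVneq j j0; first by ring.
  by move: (rows0 j); rewrite jj0 /= negb_or !negbK => /andP [/eqP -> /eqP ->]; ring.
have [a0 a1 b0 b1 supp] := col_partner k01 k0j0 k1j0 j1j0 kj1.
have j0j1 : j0 != j1 by rewrite eq_sym.
have orth01 := orth2 _ _ j0j1 (fun k kk0 kk1 => (supp k kk0 kk1).2).
exists j1; split=> //; split=> [k kk0 kk1|d dj0 dj1]; first exact: supp.
case: (boolP ((C k0 d != 0) || (C k1 d != 0))) => [kd|]; last first.
  by rewrite negb_or !negbK => /andP [/eqP -> /eqP ->].
have [_ _ d0 d1 suppd] := col_partner k01 k0j0 k1j0 dj0 kd.
have j0d : j0 != d by rewrite eq_sym.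
have j1d : j1 != d by rewrite eq_sym.
have orth0d := orth2 _ _ j0d (fun k kk0 kk1 => (suppd k kk0 kk1).2).
have orth1d := orth2 _ _ j1d (fun k kk0 kk1 => (suppd k kk0 kk1).2).
by case: (hadamard2_no_third a0 a1 b0 b1 d0 d1 orth01 orth0d orth1d).
Qed.

End CubiquitousOrthogonalBasis.

(** * Signed permutation matrices *)

Section SignedPermutations.
Variable n : nat.
Implicit Types (P Q : 'M[int]_n) (sg tu : 'S_n) (s t : 'I_n -> int).

Definition signs s := forall i, s i * s i = 1.

Definition signed_perm_mx sg s : 'M[int]_n := \matrix_(i, j) (s i *+ (sg i == j)).

Lemma mul_signed_perm_mx m sg s (A : 'M[int]_(n, m)) i j :
  (signed_perm_mx sg s *m A) i j = s i * A (sg i) j.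
Proof.
rewrite !mxE (bigD1 (sg i)) //= big1 ?addr0 => [|k /negbTE ki]; rewrite mxE.
  by rewrite eqxx mulr1n.
by rewrite eq_sym ki mulr0n mul0r.
Qed.

Lemma tr_signed_perm_mx_mul m sg s (A : 'M[int]_(n, m)) i j :
  ((signed_perm_mx sg s)^T *m A) (sg i) j = s i * A i j.
Proof.
rewrite !mxE (bigD1 i) //= big1 ?addr0 => [|k /negbTE ki]; rewrite !mxE.
  by rewrite eqxx mulr1n.
by rewrite (inj_eq perm_inj) ki mulr0n mul0r.
Qed.

Lemma mul_mx_tr_signed_perm_mx m tu t (A : 'M[int]_(m, n)) i j :
  (A *m (signed_perm_mx tu t)^T) i j = t j * A i (tu j).
Proof.
rewrite !mxE (bigD1 (tu j)) //= big1 ?addr0 => [|k /negbTE kj]; rewrite !mxE.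
  by rewrite eqxx mulr1n mulrC.
by rewrite eq_sym kj mulr0n mulr0.
Qed.

Lemma signed_perm_mx_conjE r p s t (C : 'M[int]_n) i j :
  (signed_perm_mx r s *m C *m (signed_perm_mx p t)^T) i j = s i * t j * C (r i) (p j).
Proof. by rewrite mul_mx_tr_signed_perm_mx mul_signed_perm_mx mulrCA mulrA. Qed.

Lemma cob1 : change_of_basis (1%:M : 'M[int]_n).
Proof. by rewrite /change_of_basis trmx1 mulmx1. Qed.

Lemma cob_tr P : change_of_basis P -> change_of_basis P^T.
Proof. by move=> P_cob; rewrite /change_of_basis trmxK; apply: mulmx1C. Qed.

Lemma cob_mul P Q : change_of_basis P -> change_of_basis Q -> change_of_basis (P *m Q).
Proof.
move=> P_cob Q_cob; rewrite /change_of_basis trmx_mul mulmxA -(mulmxA _ _ P) P_cob.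
by rewrite mulmx1.
Qed.

Lemma cob_det_neq0 P : change_of_basis P -> \det P != 0.
Proof.
move=> P_cob; have := congr1 determinant P_cob; rewrite det_mulmx det_tr det1.
by apply: contra_eq_neq => ->; rewrite mulr0.
Qed.

Lemma cob_dot_col P i j : change_of_basis P -> dot (P^~ i) (P^~ j) = (i == j)%:R.
Proof. by move/matrixP/(_ i j); rewrite !mxE => <-; apply: eq_bigr => k _; rewrite mxE. Qed.

Lemma signed_perm_mx_cob sg s : signs s -> change_of_basis (signed_perm_mx sg s).
Proof.
move=> s1; apply/matrixP => k k'; rewrite !mxE (bigD1 (sg^-1 k)%g) //= big1 ?addr0.
  by rewrite !mxE permKV eqxx mulr1n mulrnAr s1.
move=> i ik; rewrite !mxE; suff /negbTE -> : sg i != k by rewrite mul0r.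
by apply: contra ik => /eqP <-; rewrite permK.
Qed.

Lemma cob_signed_perm_mx P : change_of_basis P ->
  exists sg s, signs s /\ P = signed_perm_mx sg s.
Proof.
move=> P_cob.
have row_unit i : exists j, P i j * P i j = 1 /\ forall j', j' != j -> P i j' = 0.
  apply: dot_eq1; transitivity (dot (P^T^~ i) (P^T^~ i)).
    by apply: eq_bigr => j _; rewrite !mxE.
  by rewrite cob_dot_col ?eqxx //; apply: cob_tr.
have [f f_spec] := fin_all_exists row_unit.
have f_inj : injective f.
  move=> i i' fii'; apply/eqP; apply: contraT => ii'.
  have := ler_sqr2_dot (P^~ (f i)) ii'; rewrite cob_dot_col // eqxx /=.
  by rewrite {3 4}fii' (f_spec i).1 (f_spec i').1.
exists (perm f_inj), (fun i => P i (f i)); split=> [i|]; first exact: (f_spec i).1.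
apply/matrixP => i j; rewrite mxE permE.
have [<-|fij] := eqVneq (f i) j; first by rewrite mulr1n.
by rewrite mulr0n (f_spec i).2 // eq_sym.
Qed.

End SignedPermutations.

Section ChangeOfBasis.
Variable n : nat.
Implicit Types (P Q C : 'M[int]_n) (L : 'cV[int]_n -> Prop).

Lemma cubiquitous_cob P L : change_of_basis P -> cubiquitous L ->
  cubiquitous (fun y => L (P^T *m y)).
Proof.
move=> P_cob L_cub x; have [sg [s [s1 defP]]] := cob_signed_perm_mx P_cob.
(* Flipping the sign of coordinate i turns x_i + {0, 1} into (- x_i - 1) + {0, 1}. *)
pose neg : 'cV[int]_n := \col_i ((s i < 0)%R)%:R.
have [y [Ly y01]] := L_cub (P^T *m (x + neg)).
exists (P *m y); split=> [|i]; first by rewrite mulmxA P_cob mul1mx.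
move: (y01 (sg i)); rewrite defP mul_signed_perm_mx tr_signed_perm_mx_mul !mxE.
by case: (sqr1P (s1 i)) => -> /=; lia.
Qed.

Lemma is_basis_of_mulmx_cob Q L C : change_of_basis Q ->
  is_basis_of L C -> is_basis_of L (C *m Q).
Proof.
move=> Q_cob [C_span C_det]; split; last by rewrite det_mulmx mulf_neq0 // cob_det_neq0.
move=> y; rewrite C_span; split=> [[c ->]|[c ->]]; last by exists (Q *m c); rewrite mulmxA.
by exists (Q^T *m c); rewrite mulmxA -(mulmxA C) (mulmx1C Q_cob) mulmx1.
Qed.

Lemma is_basis_of_cob_mulmx P L C : change_of_basis P ->
  is_basis_of L C -> is_basis_of (fun y => L (P^T *m y)) (P *m C).
Proof.
move=> P_cob [C_span C_det]; split; last by rewrite det_mulmx mulf_neq0 // cob_det_neq0.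
move=> y; rewrite C_span; split=> [[c def_y]|[c ->]]; last first.
  by exists c; rewrite !mulmxA P_cob mul1mx.
by exists c; rewrite -mulmxA -def_y mulmxA (mulmx1C P_cob) mul1mx.
Qed.

Lemma orthogonal_cols_cob P Q C : change_of_basis P -> change_of_basis Q ->
  orthogonal_cols C -> orthogonal_cols (P *m C *m Q).
Proof.
move=> P_cob Q_cob C_orth i j ij.
have [sg [s [s1 ->]]] := cob_signed_perm_mx P_cob.
have [tu [t [_ defQ]]] := cob_signed_perm_mx (cob_tr Q_cob).
rewrite -[Q]trmxK defQ.
transitivity (t i * t j * dot (C^~ (tu i)) (C^~ (tu j))); last first.
  by rewrite C_orth ?mulr0 // (inj_eq perm_inj).
rewrite mulr_sumr (reindex_inj (@perm_inj _ sg)); apply: eq_bigr => k _ /=.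
rewrite !signed_perm_mx_conjE.
transitivity (s k * s k * (t i * t j * (C (sg k) (tu i) * C (sg k) (tu j)))); first by ring.
by rewrite s1 mul1r.
Qed.

Lemma cubiquitous_sub L L' : cubiquitous L' -> (forall y, L' y -> L y) -> cubiquitous L.
Proof. by move=> L'_cub sub x; have [y [/sub Ly y01]] := L'_cub x; exists y. Qed.

End ChangeOfBasis.

Definition cub_orth_basis n (C : 'M[int]_n) :=
  exists L, [/\ cubiquitous L, is_basis_of L C & orthogonal_cols C].

Lemma cub_orth_basis_cob n (P Q C : 'M[int]_n) :
  change_of_basis P -> change_of_basis Q -> cub_orth_basis C ->
  cub_orth_basis (P *m C *m Q).
Proof.
move=> P_cob Q_cob [L [L_cub C_basis C_orth]]; exists (fun y => L (P^T *m y)).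
split; [exact: cubiquitous_cob | | exact: orthogonal_cols_cob].
exact/is_basis_of_mulmx_cob/is_basis_of_cob_mulmx.
Qed.

(** * Reduction to block diagonal form *)

Lemma blks_size_cons X ks : blks_size (X :: ks) = (blk_size X + blks_size ks)%N.
Proof. by []. Qed.

Lemma blks_size_rcons ks X : blks_size (rcons ks X) = (blks_size ks + blk_size X)%N.
Proof. by rewrite /blks_size map_rcons -cats1 sumn_cat /= addn0. Qed.

Definition blk_entry X (i j : nat) : int := blkdiag_entry [:: X] i j.

Definition blkdiag_mx n ks : 'M[int]_n := \matrix_(i, j) blkdiag_entry ks i j.

Lemma blkdiag_entry_cons X ks i j :
  blkdiag_entry (X :: ks) i j =
  if ((i < blk_size X) && (j < blk_size X))%N then blk_entry X i j
  else if ((i < blk_size X) || (j < blk_size X))%N then 0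
  else blkdiag_entry ks (i - blk_size X) (j - blk_size X).
Proof. by case: X; case: i => [|[|i]]; case: j => [|[|j]]. Qed.

Lemma blkdiag_entry_out ks i j :
  (blks_size ks <= i)%N || (blks_size ks <= j)%N -> blkdiag_entry ks i j = 0.
Proof.
elim: ks i j => [//|X ks IH] i j; rewrite blks_size_cons blkdiag_entry_cons => out.
case: ifP => [/andP [iX jX] | _]; first lia.
by case: ifP => // /norP [iX jX]; apply: IH; lia.
Qed.

Lemma blk_entry_out X i j :
  (blk_size X <= i)%N || (blk_size X <= j)%N -> blk_entry X i j = 0.
Proof. by move=> out; apply: blkdiag_entry_out; rewrite /blks_size /= addn0. Qed.

Lemma blkdiag_entry_rcons ks X i j :
  blkdiag_entry (rcons ks X) i j =
  if ((i < blks_size ks) && (j < blks_size ks))%N then blkdiag_entry ks i j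
  else if ((i < blks_size ks) || (j < blks_size ks))%N then 0
  else blk_entry X (i - blks_size ks) (j - blks_size ks).
Proof.
elim: ks i j => [|Y ks IH] i j; first by rewrite /= !subn0.
rewrite rcons_cons blkdiag_entry_cons IH blks_size_cons [in RHS]blkdiag_entry_cons.
by rewrite -!subnDA; do ![case: ifP => ? //]; lia.
Qed.

(* Row signs a0, a1 and column signs 1, - a0 b0 turn a Hadamard block into [[1, -1], [1, 1]]. *)
Lemma hadamard2_normalize (a0 b0 a1 b1 : int) : hadamard2 a0 b0 a1 b1 ->
  [/\ a0 * 1 * a0 = 1, a0 * - (a0 * b0) * b0 = -1,
      a1 * 1 * a1 = 1 & a1 * - (a0 * b0) * b1 = 1].
Proof.
by case=> /abs1P [] -> /abs1P [] -> /abs1P [] -> /abs1P [] -> orth; split; lia.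
Qed.

Lemma perm_fix_ge n m (q : 'S_n) : (forall i : 'I_n, (i < m)%N -> q i = i) ->
  forall i : 'I_n, (m <= i)%N -> (m <= q i)%N.
Proof.
move=> q_fix i mi; rewrite leqNgt; apply/negP => qim.
by move: (q_fix _ qim) => /perm_inj qii; move: qim; rewrite qii; lia.
Qed.

Lemma exists_perm2 (T : finType) (x0 x1 y0 y1 : T) : x0 != x1 -> y0 != y1 ->
  exists q : {perm T}, [/\ q x0 = y0, q x1 = y1 &
    forall z, z != x0 -> z != x1 -> z != y0 -> z != y1 -> q z = z].
Proof.
move=> x01 y01; pose x1' := tperm x0 y0 x1.
have y0x1' : y0 != x1' by rewrite -(tpermL x0 y0) /x1' (inj_eq perm_inj).
exists (tperm x0 y0 * tperm x1' y1)%g; split; rewrite ?permM.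
- by rewrite tpermL tpermD // eq_sym.
- by rewrite tpermL.
move=> z zx0 zx1 zy0 zy1; have zx1' : x1' != z.
  by rewrite /x1'; case: tpermP => _; rewrite eq_sym.
by rewrite permM !tpermD // eq_sym.
Qed.

Lemma perm_neq2 (T : finType) (q : {perm T}) x0 x1 y0 y1 x :
  q x0 = y0 -> q x1 = y1 -> x != x0 -> x != x1 -> (q x != y0) && (q x != y1).
Proof. by move=> <- <-; rewrite !(inj_eq perm_inj) => -> ->. Qed.

Lemma ord_ge_split n m (mo m1 x : 'I_n) : nat_of_ord mo = m -> nat_of_ord m1 = m.+1 ->
  (m <= x)%N -> [\/ x = mo, x = m1 | [/\ x != mo, x != m1 & (m.+2 <= x)%N]].
Proof.
move=> mo_m m1_m mx; case: (ltnP x m.+2) => [x_lt|x_ge]; last first.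
  by constructor 3; rewrite -!val_eqE /= mo_m m1_m; split=> //; lia.
by case: (ltnP x m.+1) => ?; [constructor 1 | constructor 2]; apply: val_inj => /=; lia.
Qed.

Definition block_prefix n (C : 'M[int]_n) ks := forall i j : 'I_n,
  (i < blks_size ks)%N || (j < blks_size ks)%N -> C i j = blkdiag_entry ks i j.

Lemma block_prefix_nil n (C : 'M[int]_n) : block_prefix C [::].
Proof. by []. Qed.

Section BlockPrefix.
Variables (n : nat) (C : 'M[int]_n) (ks : seq blk).
Hypothesis C_pre : block_prefix C ks.
Let m := blks_size ks.

Lemma block_prefix_off (i j : 'I_n) :
  (m <= i)%N || (m <= j)%N -> (i < m)%N || (j < m)%N -> C i j = 0.
Proof. by move=> ij_out ij_in; rewrite C_pre // blkdiag_entry_out. Qed.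

Lemma block_prefix_nz (i j : 'I_n) : C i j != 0 -> (m <= i)%N = (m <= j)%N.
Proof.
move=> Cij; apply/idP/idP => ?; rewrite leqNgt; apply: contra Cij => ?.
  by apply/eqP/block_prefix_off; lia.
by apply/eqP/block_prefix_off; lia.
Qed.

Lemma block_prefix_full : m = n -> C = blkdiag_mx n ks.
Proof.
by move=> mn; apply/matrixP => i j; rewrite mxE C_pre // (mn : blks_size ks = n) ltn_ord.
Qed.

Lemma block_prefix_rcons (C' : 'M[int]_n) X :
  (forall i j : 'I_n, (i < m)%N || (j < m)%N -> C' i j = C i j) ->
  (forall i j : 'I_n, (m <= i)%N -> (m <= j)%N ->
     (i < m + blk_size X)%N || (j < m + blk_size X)%N ->
     C' i j = blk_entry X (i - m) (j - m)) ->
  block_prefix C' (rcons ks X).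
Proof.
move=> C'_old C'_new i j; rewrite blks_size_rcons blkdiag_entry_rcons -/m => ij.
case: ifP => [/andP [im jm]|not_both]; first by rewrite C'_old ?im // C_pre ?im.
case: ifP => [ij_m|/norP [im jm]]; last by apply: C'_new; lia.
by rewrite C'_old // block_prefix_off //; lia.
Qed.

Lemma block_prefix_conj (r p : 'S_n) s t :
  (forall i : 'I_n, (i < m)%N -> [/\ r i = i, p i = i, s i = 1 & t i = 1]) ->
  forall i j : 'I_n, (i < m)%N || (j < m)%N ->
    (signed_perm_mx r s *m C *m (signed_perm_mx p t)^T) i j = C i j.
Proof.
move=> fix_m i j ij; rewrite signed_perm_mx_conjE.
have r_ge := @perm_fix_ge _ m r (fun i im => let: And4 ri _ _ _ := fix_m i im in ri).
have p_ge := @perm_fix_ge _ m p (fun i im => let: And4 _ pi _ _ := fix_m i im in pi).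
case: (ltnP i m) => [im|mi]; case: (ltnP j m) => [jm|mj].
- by have [-> _ -> _] := fix_m i im; have [_ -> _ ->] := fix_m j jm; rewrite !mul1r.
- have [-> _ _ _] := fix_m i im; have pjm := p_ge j mj.
  by rewrite (@block_prefix_off i (p j)) ?(@block_prefix_off i j) ?mulr0 //; lia.
- have [_ -> _ _] := fix_m j jm; have rim := r_ge i mi.
  by rewrite (@block_prefix_off (r i) j) ?(@block_prefix_off i j) ?mulr0 //; lia.
- by move: ij; rewrite ltnNge mi ltnNge mj.
Qed.

Lemma block_prefix_rcons_entry X (k0 j0 : 'I_n) : (m <= k0)%N -> (m <= j0)%N ->
  isolated_entry C k0 j0 -> blk_size X = 1%N -> `|C k0 j0| = blk_entry X 0 0 ->
  exists P Q, [/\ change_of_basis P, change_of_basis Q &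
                  block_prefix (P *m C *m Q) (rcons ks X)].
Proof.
move=> mk0 mj0 [col0 row0] szX CX.
have mn : (m < n)%N by apply: leq_ltn_trans mk0 (ltn_ord k0).
pose mo := Ordinal mn.
have gt_mo (i : 'I_n) : (m <= i)%N -> i != mo -> (m < i)%N by rewrite -val_eqE /=; lia.
pose t (j : 'I_n) : int := if j == mo then (-1) ^+ (C k0 j0 < 0)%R else 1.
have t1 : signs t by move=> j; rewrite /t; case: ifP => // _; rewrite -signr_addb addbb.
exists (signed_perm_mx (tperm mo k0) (fun=> 1)), (signed_perm_mx (tperm mo j0) t)^T.
split; [exact: signed_perm_mx_cob | exact/cob_tr/signed_perm_mx_cob | ].
apply: block_prefix_rcons.
  apply: block_prefix_conj => i im.
  have [imo ik0 ij0] : [/\ mo != i, k0 != i & j0 != i] by rewrite -!val_eqE /=; split; lia.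
  by rewrite /t !tpermD // eq_sym (negbTE imo).
move=> i j mi mj; rewrite szX signed_perm_mx_conjE => ij.
have [->|imo] := eqVneq i mo; last first.
  have jmo : j = mo by apply/val_inj => /=; have := gt_mo i mi imo; lia.
  rewrite jmo tpermL col0 ?mulr0 ?blk_entry_out //; last first.
    by apply: contra imo => /eqP h; rewrite -(tpermK mo k0 i) h tpermR.
  by have := gt_mo i mi imo; lia.
rewrite tpermL mul1r /= subnn; have [->|jmo] := eqVneq j mo.
  by rewrite tpermL /t eqxx subnn -CX normrEsign.
rewrite row0 ?mulr0 ?blk_entry_out //; last first.
  by apply: contra jmo => /eqP h; rewrite -(tpermK mo j0 j) h tpermR.
by have := gt_mo j mj jmo; lia.
Qed.

Lemma block_prefix_rcons_square (k0 k1 j0 j1 : 'I_n) :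
  (m <= k0)%N -> (m <= k1)%N -> (m <= j0)%N -> (m <= j1)%N -> k0 != k1 -> j0 != j1 ->
  isolated_square C k0 k1 j0 j1 -> hadamard2 (C k0 j0) (C k0 j1) (C k1 j0) (C k1 j1) ->
  exists P Q, [/\ change_of_basis P, change_of_basis Q &
                  block_prefix (P *m C *m Q) (rcons ks Blk3)].
Proof.
move=> mk0 mk1 mj0 mj1 k01 j01 [cols0 rows0] had.
have m1n : (m.+1 < n)%N.
  by have := ltn_ord k0; have := ltn_ord k1; move: k01; rewrite -val_eqE /=; lia.
pose mo : 'I_n := Ordinal (ltnW m1n); pose m1 : 'I_n := Ordinal m1n.
have mom1 : mo != m1 by rewrite -val_eqE /=; lia.
have m1mo : m1 != mo by rewrite eq_sym.
have [r [rmo rm1 r_id]] := exists_perm2 mom1 k01.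
have [p [pmo pm1 p_id]] := exists_perm2 mom1 j01.
pose s (i : 'I_n) : int := if i == mo then C k0 j0 else if i == m1 then C k1 j0 else 1.
pose t (j : 'I_n) : int := if j == m1 then - (C k0 j0 * C k0 j1) else 1.
have [a0 b0 a1 b1 _] := had; have [v00 v01 v10 v11] := hadamard2_normalize had.
have s1 : signs s by move=> i; rewrite /s; do 2?case: ifP => _; rewrite ?abs1_sqr.
have t1 : signs t.
  by move=> j; rewrite /t; case: ifP => _ //; rewrite mulrNN abs1_sqr // normrM a0 b0.
have rest x := @ord_ge_split _ m mo m1 x erefl erefl.
exists (signed_perm_mx r s), (signed_perm_mx p t)^T.
split; [exact: signed_perm_mx_cob | exact/cob_tr/signed_perm_mx_cob | ].
apply: block_prefix_rcons.
  apply: block_prefix_conj => i im.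
  have neq (x : 'I_n) : (m <= x)%N -> i != x by move=> mx; rewrite -val_eqE /=; lia.
  by rewrite /s /t !(negbTE (neq mo _)) ?(negbTE (neq m1 _)) // r_id ?p_id ?neq.
move=> i j mi mj /= ij; rewrite signed_perm_mx_conjE.
have [->|->|[imo im1 im2]] := rest i mi.
- rewrite /s eqxx rmo; have [->|->|[jmo jm1 jm2]] := rest j mj.
  + by rewrite /t (negbTE mom1) pmo subnn.
  + by rewrite /t eqxx pm1 subnn subSnn.
  + have /andP [pj0 pj1] := perm_neq2 pmo pm1 jmo jm1.
    by rewrite (rows0 _ pj0 pj1).1 mulr0 blk_entry_out //=; clear -jm2; lia.
- rewrite /s (negbTE m1mo) eqxx rm1; have [->|->|[jmo jm1 jm2]] := rest j mj.
  + by rewrite /t (negbTE mom1) pmo subSnn subnn.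
  + by rewrite /t eqxx pm1 subSnn.
  + have /andP [pj0 pj1] := perm_neq2 pmo pm1 jmo jm1.
    by rewrite (rows0 _ pj0 pj1).2 mulr0 blk_entry_out //=; clear -jm2; lia.
have /andP [ri0 ri1] := perm_neq2 rmo rm1 imo im1.
have [->|->|[jmo jm1 jm2]] := rest j mj; last by clear -ij im2 jm2; lia.
- by rewrite pmo (cols0 _ ri0 ri1).1 mulr0 blk_entry_out //=; clear -im2; lia.
- by rewrite pm1 (cols0 _ ri0 ri1).2 mulr0 blk_entry_out //=; clear -im2; lia.
Qed.

End BlockPrefix.

Lemma block_prefix_step n (C : 'M[int]_n) ks :
  cub_orth_basis C -> block_prefix C ks -> (blks_size ks < n)%N ->
  exists P Q ks', [/\ change_of_basis P, change_of_basis Q,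
    block_prefix (P *m C *m Q) ks', (blks_size ks < blks_size ks')%N
    & (blks_size ks' <= n)%N].
Proof.
move=> [L [L_cub C_basis C_orth]] C_pre mn; set m := blks_size ks in mn *.
pose mo := Ordinal mn; have [j0 Cj0] := row_nonzero C_basis mo.
have mj0 : (m <= j0)%N by rewrite -(block_prefix_nz C_pre Cj0).
have [[k1 k1mo Ck1]|col0] :
    (exists2 k1, k1 != mo & C k1 j0 != 0) \/ (forall k, k != mo -> C k j0 = 0).
  have [/existsP [k /andP [kmo Ck]]|/existsPn none] :=
    boolP [exists k, (k != mo) && (C k j0 != 0)]; first by left; exists k.
  by right=> k kmo; apply/eqP; move: (none k); rewrite kmo negbK.
  have mok1 : mo != k1 by rewrite eq_sym.
  have [j1 [j1j0 sq had]] := col_isolated_square L_cub C_basis C_orth mok1 Cj0 Ck1.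
  have mk1 : (m <= k1)%N by rewrite (block_prefix_nz C_pre Ck1).
  have mj1 : (m <= j1)%N.
    have [_ a01 _ _ _] := had; rewrite -(block_prefix_nz C_pre (i := mo)) //.
    by rewrite -normr_eq0 a01.
  have j01 : j0 != j1 by rewrite eq_sym.
  have [P [Q [P_cob Q_cob PCQ_pre]]] :=
    @block_prefix_rcons_square _ _ _ C_pre mo k1 j0 j1 (leqnn _) mk1 mj0 mj1 mok1 j01 sq had.
  exists P, Q, (rcons ks Blk3); split=> //; rewrite blks_size_rcons /= -/m ?addn2 //.
  by have := ltn_ord k1; move: k1mo; rewrite -val_eqE /=; lia.
have [iso Cabs] := col_isolated_entry L_cub C_basis C_orth Cj0 col0.
have [X [szX CX]] : exists X, blk_size X = 1%N /\ `|C mo j0| = blk_entry X 0 0.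
  by case: Cabs => ?; [exists Blk1 | exists Blk2].
have [P [Q [P_cob Q_cob PCQ_pre]]] :=
  @block_prefix_rcons_entry _ _ _ C_pre X mo j0 (leqnn _) mj0 iso szX CX.
by exists P, Q, (rcons ks X); split=> //; rewrite blks_size_rcons szX addn1.
Qed.

Lemma block_prefix_complete n (C : 'M[int]_n) ks :
  cub_orth_basis C -> block_prefix C ks -> (blks_size ks <= n)%N ->
  exists P Q ks', [/\ change_of_basis P, change_of_basis Q,
    blks_size ks' = n & P *m C *m Q = blkdiag_mx n ks'].
Proof.
move=> C_cob C_pre size_le.
move: {2}(n - blks_size ks)%N (leqnn (n - blks_size ks)) => k.
elim: k C ks C_cob C_pre size_le => [|k IH] C ks C_cob C_pre size_le gap.
  have size_n : blks_size ks = n by lia.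
  exists 1%:M, 1%:M, ks.
  by split; rewrite ?mul1mx ?mulmx1 -?(block_prefix_full C_pre) //; apply: cob1.
have [size_lt|size_ge] := ltnP (blks_size ks) n.
  2: by apply: (IH _ _ C_cob C_pre size_le); lia.
have [P [Q [ks' [P_cob Q_cob pre' grow size_le']]]] := block_prefix_step C_cob C_pre size_lt.
have [P' [Q' [ks'' [P'_cob Q'_cob size_n def_D]]]] :=
  IH _ _ (cub_orth_basis_cob P_cob Q_cob C_cob) pre' size_le' ltac:(lia).
exists (P' *m P), (Q *m Q'), ks''.
by split; [exact: cob_mul | exact: cob_mul | | rewrite -def_D !mulmxA].
Qed.

Lemma cubiquitous_block_diag n (L : 'cV[int]_n -> Prop) :
  orthogonal_sublattice L -> cubiquitous L ->
  exists P B, [/\ change_of_basis P, is_basis_of L B & allowed_block_diag (P *m B)].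
Proof.
move=> [B [B_basis B_orth]] L_cub.
have B_cob : cub_orth_basis B by exists L; split=> // i j /B_orth; rewrite dotZ_col.
have [P [Q [ks [P_cob Q_cob size_ks PBQ]]]] :=
  block_prefix_complete B_cob (block_prefix_nil B) (leq0n n).
exists P, (B *m Q); split=> //; first exact: is_basis_of_mulmx_cob.
by exists ks; rewrite mulmxA PBQ.
Qed.

(** * Cubiquity of the block lattices *)

Lemma blk_entry_cube X (x : nat -> int) : exists c : nat -> int,
  forall i, (i < blk_size X)%N -> is_bit (\sum_(j < blk_size X) blk_entry X i j * c j - x i).
Proof.
case: X => /=.
- by exists x => -[|//] _; rewrite big_ord1 mul1r subrr.
- exists (fun=> ((x 0%N + 1) %/ 2)%Z) => -[|//] _; rewrite big_ord1 /is_bit.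
  by have := divz2_spec (x 0%N + 1); rewrite /blk_entry /=; lia.
(* With x0 + x1 = 2 q + r: c0 - c1 = x0 and c0 + c1 = x1 + r. *)
pose z := x 0%N + x 1%N; pose q := (z %/ 2)%Z; pose r := (z %% 2)%Z.
exists (fun j => if j is 0%N then q + r else x 1%N - q) => -[|[|//]] _;
  rewrite !big_ord_recl big_ord0 /is_bit /blk_entry /=;
  have := divz2_spec z; rewrite -/q -/r /z; lia.
Qed.

Lemma blkdiag_entry_cube ks (x : nat -> int) : exists c : nat -> int,
  forall i, (i < blks_size ks)%N ->
    is_bit (\sum_(j < blks_size ks) blkdiag_entry ks i j * c j - x i).
Proof.
elim: ks x => [|Y ks IH] x; first by exists x.
set a := blk_size Y; have [c1 c1_bit] := blk_entry_cube Y x.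
have [c2 c2_bit] := IH (fun i => x (a + i)%N).
pose c j := if (j < a)%N then c1 j else c2 (j - a)%N.
exists c => i; rewrite blks_size_cons -/a => i_lt.
pose F j := blkdiag_entry (Y :: ks) i j * c j.
have -> : \sum_(j < a + blks_size ks) F j =
    \sum_(j < a) F (lshift (blks_size ks) j) + \sum_(j < blks_size ks) F (rshift a j).
  exact: big_split_ord.
have [ia|ai] := ltnP i a.
  rewrite [X in _ + X - _]big1 ?addr0 => [|j _]; last first.
    by rewrite /F blkdiag_entry_cons -/a /= ia /= ltnNge leq_addr mul0r.
  rewrite (eq_bigr (fun j : 'I_a => blk_entry Y i j * c1 j)) ?c1_bit // => j _.
  by rewrite /F blkdiag_entry_cons -/a ia /= ltn_ord /c /= ltn_ord.
rewrite big1 => [|j _]; last first.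
  by rewrite /F blkdiag_entry_cons -/a ltnNge ai /= ltn_ord mul0r.
rewrite add0r; have := c2_bit (i - a)%N ltac:(lia); rewrite subnKC // => bit2.
rewrite (eq_bigr (fun j : 'I_(blks_size ks) => blkdiag_entry ks (i - a) j * c2 j)) //.
move=> j _; rewrite /F blkdiag_entry_cons -/a ltnNge ai /= ltnNge leq_addr /= addKn.
by rewrite /c ltnNge leq_addr /= addKn.
Qed.

Lemma blkdiag_mx_cubiquitous n ks : blks_size ks = n ->
  cubiquitous (fun y => exists c, y = blkdiag_mx n ks *m c).
Proof.
move=> size_ks x.
have [c c_bit] := blkdiag_entry_cube ks (fun i => if insub i is Some i' then x i' 0 else 0).
exists (blkdiag_mx n ks *m \col_j c j); split; first by exists (\col_j c j).
move=> i; have := c_bit i; rewrite size_ks ltn_ord valK => /(_ isT).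
suff -> : (blkdiag_mx n ks *m \col_j c j) i 0 = \sum_(j < n) blkdiag_entry ks i j * c j.
  by [].
by rewrite mxE; apply: eq_bigr => j _; rewrite !mxE.
Qed.

Lemma block_diag_cubiquitous n (L : 'cV[int]_n -> Prop) (P B : 'M[int]_n) :
  change_of_basis P -> is_basis_of L B -> allowed_block_diag (P *m B) -> cubiquitous L.
Proof.
move=> P_cob [B_span _] [ks [size_ks PB]].
apply: cubiquitous_sub (cubiquitous_cob (cob_tr P_cob) (blkdiag_mx_cubiquitous size_ks)) _.
move=> y [c]; rewrite trmxK /blkdiag_mx -PB -mulmxA => /(congr1 (mulmx P^T)).
by rewrite !mulmxA P_cob !mul1mx => def_y; apply/B_span; exists c.
Qed.

Theorem theorem1p5 (n : nat) (L : 'cV[int]_n -> Prop) :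
  orthogonal_sublattice L ->
  (cubiquitous L <->
   exists (P : 'M[int]_n) (B : 'M[int]_n),
     change_of_basis P /\ is_basis_of L B /\ allowed_block_diag (P *m B)).
Proof.
move=> L_orth; split=> [L_cub | [P [B [P_cob [B_basis PB]]]]].
  by have [P [B [P_cob B_basis PB]]] := cubiquitous_block_diag L_orth L_cub; exists P, B.
exact: block_diag_cubiquitous P_cob B_basis PB.
Qed.
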